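(* Let $m,a,b,n$ be positive integers with $n\ge 3$ and $(3m+1)/2\le a<b\le (5m-1)/3$. Let $A\subset\mathbb N_+$ with $|A|=n-1$, $\min A=a$, $\max A=b$, and suppose that $A$ induces a $B_3$ set in $\mathbb Z/m\mathbb Z$ in the following sense: the sums $x_1+\dots+x_h$, taken over all $h\in\{1,2,3\}$ and all multisets $\{x_1,\dots,x_h\}$ of elements of $A$, are pairwise distinct modulo $m$ (distinct multisets, including those of different sizes, give distinct residues). Let $S=\langle \{m\}\cup A\rangle_{4m}$. Then $S$ has conductor $4m$, $|P\cap L|=n$, and $$W_0(S)=-\binom{n}{3}.$$
   Context: $\mathbb N=\{0,1,2,\dots\}$, $\mathbb N_+=\mathbb N\setminus\{0\}$; $[x,y]=\{z\in\mathbb Z: x\le z\le y\}$. For a finite set $B$ of positive integers and a positive integer $t$, $\langle B\rangle_t=\big(\sum_{x\in B}\mathbb N x\big)\cup\{z\in\mathbb Z: z\ge t\}$; this is a numerical semigroup. A numerical semigroup is a submonoid $S\subseteq\mathbb N$ with $\mathbb N\setminus S$ finite; multiplicity $m=\min(S\setminus\{0\})$; conductor $c=1+\max(\mathbb Z\setminus S)$; $q=\lceil c/m\rceil$, $\rho=qm-c$. Let $S^*=S\setminus\{0\}$, $D=S^*+S^*$, $P=S^*\setminus D$ (primitive elements), $L=S\cap[0,c-1]$, $D_q=D\cap[c,c+m-1]$, and $W_0(S)=|P\cap L|\,|L|-q|D_q|+\rho$. *)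

From mathcomp Require Import all_boot all_order all_algebra.
Set Implicit Arguments. Unset Strict Implicit. Unset Printing Implicit Defensive.

Fixpoint rep (B : seq nat) (x : nat) : bool :=
  match B with
  | [::] => x == 0
  | b :: B' => [exists k : 'I_x.+1, (k * b <= x) && rep B' (x - k * b)]
  end.

(* membership in <B>_t = (sum_{x in B} N x) ∪ {z >= t} *)
Definition inS (B : seq nat) (t x : nat) : bool := (t <= x) || rep B x.

(* multiplicity m = min (S \ {0}); every z >= t is in S, so it is <= max t 1 *)
Definition mult (B : seq nat) (t : nat) : nat :=
  head (maxn t 1) [seq x <- iota 1 t | inS B t x].

(* conductor c = 1 + max (Z \ S); all gaps lie in [0, t), and if there are
   no nonnegative gaps then max (Z \ S) = -1, so c = 0 *)
Definition cond (B : seq nat) (t : nat) : nat :=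
  \max_(0 <= z < t | ~~ inS B t z) z.+1.

Definition inD (B : seq nat) (t x : nat) : bool :=
  has (fun y => inS B t y && inS B t (x - y)) (iota 1 x.-1).

Definition inP (B : seq nat) (t x : nat) : bool :=
  [&& 0 < x, inS B t x & ~~ inD B t x].

Definition qS (B : seq nat) (t : nat) : nat :=
  let m := mult B t in let c := cond B t in (c + m - 1) %/ m.   (* ceil (c/m) *)

Definition rhoS (B : seq nat) (t : nat) : nat :=
  qS B t * mult B t - cond B t.

Definition cardL (B : seq nat) (t : nat) : nat :=
  count (inS B t) (iota 0 (cond B t)).

Definition cardPL (B : seq nat) (t : nat) : nat :=
  count (inP B t) (iota 0 (cond B t)).

Definition cardDq (B : seq nat) (t : nat) : nat :=
  count (inD B t) (iota (cond B t) (mult B t)).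

Definition W0 (B : seq nat) (t : nat) : int :=
  ((cardPL B t * cardL B t)%:Z - (qS B t * cardDq B t)%:Z + (rhoS B t)%:Z)%R.

(* the sums over multisets of size 1..3 of elements of A are pairwise distinct
   modulo m; multisets are represented by lists up to permutation *)
Definition B3_mod (A : seq nat) (m : nat) : Prop :=
  forall s1 s2 : seq nat,
    0 < size s1 <= 3 -> 0 < size s2 <= 3 ->
    all (mem A) s1 -> all (mem A) s2 ->
    sumn s1 = sumn s2 %[mod m] -> perm_eq s1 s2.

From mathcomp Require Import all_boot all_order all_algebra zify.
Set Implicit Arguments. Unset Strict Implicit. Unset Printing Implicit Defensive.

(* Every element of S = <m, A>_{4m} below 5m is k m + s with s the sum of an h-element
   multiset of A.  As A lies in (3m/2, 5m/3), such an s lies in (3hm/2, 5hm/3), which forces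
   2k + 3h < 10; the twelve admissible layers (k, h) split into those below 4m, which make up L
   (its primitive elements being m and A), and those in [4m, 5m), which make up D_q.  The B_3
   condition modulo m makes all the numbers k m + s distinct: the residue of s determines the
   multiset, and no nonempty such s is a multiple of m.  Hence |L|, |P ∩ L| and |D_q| are sums
   of multiset coefficients, c = 4m, q = 4, rho = 0, and W_0 = -C(n, 3) is a binomial
   identity. *)

Lemma ndvdn_between c m x : c * m < x < c.+1 * m -> ~~ (m %| x).
Proof.
case/andP => lo hi; apply/negP => /dvdnP [q x_q].
by move: lo hi; rewrite x_q !ltn_mul2r => /andP [_ c_q] /andP [_]; rewrite ltnS leqNgt c_q.
Qed.

Lemma count_iota_mem (p : pred nat) lo n s : uniq s ->
  (forall z, z \in s -> lo <= z < lo + n) ->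
  (forall z, lo <= z < lo + n -> p z = (z \in s)) ->
  count p (iota lo n) = size s.
Proof.
move=> s_uniq s_range p_s; rewrite -size_filter; apply/perm_size/uniq_perm => //.
  by rewrite filter_uniq // iota_uniq.
move=> z; rewrite mem_filter mem_iota.
by case: (boolP (lo <= z < lo + n)) => [/p_s -> | /negbTE zN]; rewrite ?andbT ?andbF //;
  apply/esym/negbTE; apply: contraFN zN => /s_range.
Qed.

(* [msums h A] lists the sums of the h-element multisets of A, each multiset once when A is
   duplicate-free: a multiset is enumerated by its first element x and a multiset of size h - 1
   drawn from the suffix of A starting at x. *)
Fixpoint msums (h : nat) (A : seq nat) {struct h} : seq nat :=
  if h is h'.+1 then
    (fix sums_from A' := if A' is x :: A'' then
                           map (addn x) (msums h' A') ++ sums_from A''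
                         else [::]) A
  else [:: 0].

Lemma msums0 A : msums 0 A = [:: 0]. Proof. by []. Qed.
Lemma msumsS0 h : msums h.+1 [::] = [::]. Proof. by []. Qed.
Lemma msumsSS h x A :
  msums h.+1 (x :: A) = map (addn x) (msums h (x :: A)) ++ msums h.+1 A.
Proof. by []. Qed.

Lemma mem_msums h A z :
  z \in msums h A <-> exists s, [/\ size s = h, all (mem A) s & sumn s = z].
Proof.
elim: h A z => [|h IHh] A z.
  rewrite msums0 inE; split => [/eqP -> | [s [/size0nil -> _ <-]] //].
  by exists [::].
elim: A z => [|x A IHA] z.
  by rewrite msumsS0; split => // [[[|y s] []]].
rewrite msumsSS mem_cat; split.
- case/orP => [/mapP [y /IHh [s [hs Hs <-]] ->] | /IHA [s [hs Hs <-]]].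
    by exists (x :: s); rewrite /= hs inE eqxx Hs.
  by exists s; split => //; apply: sub_all Hs => y /= yA; rewrite inE yA orbT.
- case=> s [hs Hs <-]; have [xs | xNs] := boolP (x \in s).
    apply/orP; left; have s_rem := perm_to_rem xs.
    apply/mapP; exists (sumn (rem x s)); last by rewrite (perm_sumn s_rem).
    apply/IHh; exists (rem x s); split => //; first by rewrite size_rem // hs.
    by apply/allP => y /mem_rem /(allP Hs).
  apply/orP; right; apply/IHA; exists s; split => //.
  apply/allP => y ys; have := allP Hs y ys; rewrite inE.
  by case/predU1P => // yx; rewrite -yx ys in xNs.
Qed.

Lemma size_msums h A : size (msums h A) = 'C(size A + h - 1, h).
Proof.
case: h => [|h]; first by rewrite bin0.
rewrite addnS subSS subn0; elim: h A => [|h IHh] A.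
  elim: A => [|x A IHA] //.
  by rewrite msumsSS size_cat size_map IHA !addn0 !bin1.
elim: A => [|x A IHA]; first by rewrite bin_small.
by rewrite msumsSS size_cat size_map IHh IHA /= !addSn !addnS (binS (size A + h).+1) addnC.
Qed.

Definition Bh_set (h : nat) (A : seq nat) : Prop :=
  forall s1 s2, size s1 = h -> size s2 = h -> all (mem A) s1 -> all (mem A) s2 ->
    sumn s1 = sumn s2 -> perm_eq s1 s2.

Lemma Bh_set_sub h A B : {subset A <= B} -> Bh_set h B -> Bh_set h A.
Proof. by move=> AB HB s1 s2 ? ? /(sub_all AB) ? /(sub_all AB); apply: HB. Qed.

Lemma Bh_setS h x A : x \in A -> Bh_set h.+1 A -> Bh_set h A.
Proof.
move=> xA HA s1 s2 h1 h2 A1 A2 E; rewrite -(perm_cons x).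
by apply: HA; rewrite /= ?h1 ?h2 ?xA ?E.
Qed.

Lemma uniq_msums h A : uniq A -> Bh_set h A -> uniq (msums h A).
Proof.
elim: h A => [|h IHh] A //; elim: A => [|x A IHA] // uxA HxA.
move: (uxA); rewrite cons_uniq => /andP [xNA uA].
have AxA : {subset A <= x :: A} by move=> y yA; rewrite inE yA orbT.
rewrite msumsSS cat_uniq map_inj_uniq ?IHh ?IHA ?andbT //; first last.
- exact: addnI.
- exact: Bh_setS (mem_head x A) HxA.
- exact: Bh_set_sub HxA.
apply/hasPn => _ /mem_msums [s2 [h2 A2 <-]].
apply/mapP => -[_ /mem_msums [s1 [h1 A1 <-]] E].
have /perm_mem/(_ x) : perm_eq (x :: s1) s2.
  by apply: HxA; rewrite /= ?h1 ?h2 ?mem_head ?A1 ?E ?(sub_all AxA A2).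
by rewrite mem_head => /esym /(allP A2) /= xA; rewrite xA in xNA.
Qed.

Lemma rep_consP b B x : 0 < b ->
  rep (b :: B) x <-> exists k, k * b <= x /\ rep B (x - k * b).
Proof.
move=> b_gt0 /=; split => [/existsP [k /andP [kb R]] | [k [kb R]]]; first by exists k.
have k_lt : k < x.+1 by rewrite ltnS (leq_trans _ kb) // leq_pmulr.
by apply/existsP; exists (Ordinal k_lt); rewrite /= kb.
Qed.

Lemma sumn_cons_split b B s : all (mem (b :: B)) s ->
  exists k s', all (mem B) s' /\ sumn s = k * b + sumn s'.
Proof.
elim: s => [|y s IHs] /=; first by exists 0, [::].
case/andP; rewrite inE => /predU1P [-> | yB] /IHs [k [s' [Bs' ->]]].
  by exists k.+1, s'; rewrite mulSn addnA.
by exists k, (y :: s'); rewrite /= yB Bs' addnCA.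
Qed.

Lemma rep_sumn B x : 0 \notin B -> rep B x <-> exists s, all (mem B) s /\ sumn s = x.
Proof.
elim: B x => [|b B IHB] x; rewrite ?inE.
  split => [/eqP -> | [s [Bs <-]]]; first by exists [::].
  by case: s Bs.
case/norP => b_neq0 B0; rewrite rep_consP ?lt0n 1?eq_sym //; split.
  case=> k [kb /(IHB _ B0) [s [Bs sum_s]]]; exists (nseq k b ++ s); split.
    rewrite all_cat; apply/andP; split; apply/allP => y.
      by case/nseqP => -> _; exact: mem_head.
    by move/(allP Bs) => /= yB; rewrite inE yB orbT.
  by rewrite sumn_cat sumn_nseq sum_s mulnC subnKC.
case=> s [Bs <-]; have [k [s' [Bs' ->]]] := sumn_cons_split Bs.
by exists k; rewrite leq_addr addKn; split => //; apply/IHB => //; exists s'.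
Qed.

Lemma rep_cons_sumn b B x : 0 < b -> 0 \notin B ->
  rep (b :: B) x <-> exists k (s : seq nat), all (mem B) s /\ x = k * b + sumn s.
Proof.
move=> b_gt0 B0; rewrite rep_consP //; split.
  by case=> k [kb /(rep_sumn _ B0) [s [Bs sum_s]]]; exists k, s; rewrite sum_s subnKC.
case=> k [s [Bs ->]]; exists k; rewrite leq_addr addKn; split => //.
by apply/rep_sumn => //; exists s.
Qed.

Lemma rep_add B y z : 0 \notin B -> rep B y -> rep B z -> rep B (y + z).
Proof.
move=> B0 /(rep_sumn _ B0) [s1 [Bs1 <-]] /(rep_sumn _ B0) [s2 [Bs2 <-]].
by apply/rep_sumn => //; exists (s1 ++ s2); rewrite all_cat Bs1 Bs2 sumn_cat.
Qed.

Lemma inD_add B t y z : 0 < y -> 0 < z -> inS B t y -> inS B t z -> inD B t (y + z).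
Proof.
move=> y_gt0 z_gt0 Sy Sz; apply/hasP; exists y; last by rewrite Sy addKn Sz.
by rewrite mem_iota; lia.
Qed.

Lemma inS_lt_rep B t x : x < t -> inS B t x -> rep B x.
Proof. by move=> x_lt; rewrite /inS leqNgt x_lt. Qed.

Lemma inDP B t x : inD B t x -> exists y, [/\ 0 < y < x, inS B t y & inS B t (x - y)].
Proof.
case/hasP => y; rewrite mem_iota => y_range /andP [Sy Sxy].
by exists y; split => //; lia.
Qed.

Definition layer (m : nat) (A : seq nat) (kh : nat * nat) : seq nat :=
  map (addn (kh.1 * m)) (msums kh.2 A).

Definition layers (m : nat) (A : seq nat) (P : seq (nat * nat)) : seq nat :=
  flatten [seq layer m A kh | kh <- P].

Lemma mem_layers m A P z : z \in layers m A P <->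
  exists k (s : seq nat), [/\ (k, size s) \in P, all (mem A) s & z = k * m + sumn s].
Proof.
split.
  case/flatten_mapP => -[k h] kh_P /mapP [_ /mem_msums [s [/= hs As <-]] ->].
  by exists k, s; rewrite hs.
case=> k [s [ks_P As ->]]; apply/flatten_mapP; exists (k, size s) => //.
by apply/map_f/mem_msums; exists s.
Qed.

Lemma size_layers m A P :
  size (layers m A P) = sumn [seq 'C(size A + kh.2 - 1, kh.2) | kh <- P].
Proof.
rewrite size_flatten /shape -map_comp; congr sumn; apply: eq_map => kh.
by rewrite /= size_map size_msums.
Qed.

Lemma layers_cat m A P Q : layers m A (P ++ Q) = layers m A P ++ layers m A Q.
Proof. by rewrite /layers map_cat flatten_cat. Qed.

Lemma layers_sub m A P Q : {subset P <= Q} -> {subset layers m A P <= layers m A Q}.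
Proof.
move=> PQ z /mem_layers [k [s [ks_P As ->]]]; apply/mem_layers.
by exists k, s; split => //; exact: PQ.
Qed.

(* The index (k, h) stands for the layer k m + (sums of h-element multisets of A):
   Lindex gives L = S ∩ [0, 4m), Pindex its primitive elements, and Dindex gives
   D_q = D ∩ [4m, 5m). *)
Definition Pindex : seq (nat * nat) := [:: (1, 0); (0, 1)].
Definition Nindex : seq (nat * nat) := [:: (2, 0); (3, 0); (1, 1); (2, 1); (0, 2)].
Definition Lindex : seq (nat * nat) := (0, 0) :: Pindex ++ Nindex.
Definition Dindex : seq (nat * nat) := [:: (4, 0); (1, 2); (3, 1); (0, 3)].

Lemma Pindex_sub : {subset Pindex <= Lindex}.
Proof. by move=> kh kh_P; rewrite inE mem_cat kh_P orbT. Qed.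

Lemma index_complete k h : 2 * k + 3 * h < 10 -> (k, h) \in Lindex ++ Dindex.
Proof.
move=> kh_lt; have k_lt5 : k < 5 by lia.
have h_lt4 : h < 4 by lia.
by move: k_lt5 h_lt4 kh_lt; case: k => [|[|[|[|[|k]]]]]; case: h => [|[|[|[|h]]]].
Qed.

Lemma W0_binomial_identity a :
  a.+1 * (4 + 3 * a + 'C(a.+1, 2)) + 'C(a.+1, 3) = 4 * (1 + a + 'C(a.+1, 2) + 'C(a.+2, 3)).
Proof.
have c2 := bin_ffact a.+1 2; have c3 := bin_ffact a.+1 3.
rewrite !ffactnS /= !ffactn0 !muln1 (_ : 3`! = 6) // (_ : 2`! = 2) // in c2 c3.
rewrite [in RHS](binS a.+1 2).
set X := 'C(a.+1, 2) in c2 c3 *; set Y := 'C(a.+1, 3) in c3 *.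
have e3 : Y * 3 = X * a.-1.
  by apply/eqP; rewrite -(eqn_pmul2r (isT : 0 < 2)) -mulnA c3 -mulnAC c2 mulnA.
nia.
Qed.

Section Semigroup.

Variables (m : nat) (A : seq nat).
Hypothesis m_gt3 : 3 < m.
Hypothesis A_range : forall u, u \in A -> 3 * m < 2 * u /\ 3 * u < 5 * m.
Hypothesis A_uniq : uniq A.
Hypothesis A_B3 : B3_mod A m.

Lemma m_gt0 : 0 < m. Proof. exact: ltn_trans m_gt3. Qed.

Lemma A_notin0 : 0 \notin A.
Proof. by apply/negP => /A_range; lia. Qed.

Lemma notin0_mA : 0 \notin m :: A.
Proof. by rewrite inE negb_or A_notin0 andbT eq_sym -lt0n m_gt0. Qed.

Lemma sumn_range (s : seq nat) : all (mem A) s ->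
  size s * (3 * m).+1 <= 2 * sumn s /\ 3 * sumn s + size s <= size s * (5 * m).
Proof.
elim: s => [|u s IHs] //= /andP [/A_range [u_lo u_hi] /IHs].
rewrite !(mulSn (size s)) mulnS !(mulnCA (size s) _ m); lia.
Qed.

Lemma rep_mA x :
  rep (m :: A) x <-> exists k (s : seq nat), all (mem A) s /\ x = k * m + sumn s.
Proof. exact: rep_cons_sumn m_gt0 A_notin0. Qed.

Lemma Bh_set_A h : 0 < h <= 3 -> Bh_set h A.
Proof. by move=> h_range s1 s2 h1 h2 A1 A2 E; apply: A_B3; rewrite ?h1 ?h2 ?E. Qed.

Lemma sumn_ndvd (s : seq nat) : 0 < size s <= 3 -> all (mem A) s -> ~~ (m %| sumn s).
Proof.
move=> size_s /sumn_range; case: (size s) size_s => [|[|[|[|]]]] // _ range_s.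
- by apply: (@ndvdn_between 1); lia.
- by apply: (@ndvdn_between 3); lia.
- by apply: (@ndvdn_between 4); lia.
Qed.

Lemma layer_inj k1 k2 s1 s2 : size s1 <= 3 -> size s2 <= 3 ->
  all (mem A) s1 -> all (mem A) s2 -> k1 * m + sumn s1 = k2 * m + sumn s2 ->
  k1 = k2 /\ size s1 = size s2.
Proof.
move=> h1 h2 A1 A2 E.
(* Residues modulo m: B3_mod identifies nonempty multisets and sumn_ndvd separates them from
   the empty one. *)
have mod_eq : sumn s1 = sumn s2 %[mod m] by rewrite -(modnMDl k1) E modnMDl.
have [size_eq sum_eq] : size s1 = size s2 /\ sumn s1 = sumn s2.
  have [/size0nil s1_nil | s1_gt0] := posnP (size s1);
    have [/size0nil s2_nil | s2_gt0] := posnP (size s2).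
  - by rewrite s1_nil s2_nil.
  - by have := sumn_ndvd _ A2; rewrite s2_gt0 h2 /dvdn -mod_eq s1_nil mod0n => /(_ isT).
  - by have := sumn_ndvd _ A1; rewrite s1_gt0 h1 /dvdn mod_eq s2_nil mod0n => /(_ isT).
  - have s12 : perm_eq s1 s2 by apply: A_B3; rewrite ?s1_gt0 ?s2_gt0.
    by rewrite (perm_size s12) (perm_sumn s12).
split=> //; apply/eqP; rewrite -(eqn_pmul2r m_gt0); apply/eqP.
by move: E; rewrite sum_eq => /addIn.
Qed.

Lemma uniq_layers P : uniq P -> all (fun kh => kh.2 <= 3) P -> uniq (layers m A P).
Proof.
elim: P => [|[k h] P IHP] //= /andP [khNP P_uniq] /andP [h_le3 P_le3].
rewrite /layers /= cat_uniq IHP // andbT map_inj_uniq; last exact: addnI.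
apply/andP; split.
  by case: h h_le3 {khNP} => [|h] h_le3 //; apply: uniq_msums => //; exact: Bh_set_A.
apply/hasPn => z /mem_layers [k' [s' [ks'_P As' ->]]].
apply/negP => /mapP [_ /mem_msums [s [hs As <-]] E].
have s_le3 : size s <= 3 by rewrite hs.
have [k_eq size_eq] := layer_inj (allP P_le3 _ ks'_P) s_le3 As' As E.
by move: ks'_P; rewrite k_eq size_eq hs (negbTE khNP).
Qed.

Lemma layer_range k (s : seq nat) : all (mem A) s ->
  (2 * k + 3 * size s) * m + size s <= 2 * (k * m + sumn s) /\
  3 * (k * m + sumn s) + size s <= (3 * k + 5 * size s) * m.
Proof.
by move=> /sumn_range []; rewrite mulnS !(mulnCA (size s) _ m) !mulnDl; lia.
Qed.

Lemma rep_layers P z : z \in layers m A P -> rep (m :: A) z.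
Proof. by case/mem_layers => k [s [_ As ->]]; apply/rep_mA; exists k, s. Qed.

Lemma rep_lt5m x : x < 5 * m -> rep (m :: A) x -> x \in layers m A (Lindex ++ Dindex).
Proof.
move=> x_lt /rep_mA [k [s [As x_eq]]]; apply/mem_layers; exists k, s; split => //.
apply: index_complete; rewrite -(ltn_pmul2r m_gt0).
by have [lo _] := layer_range k As; rewrite -x_eq in lo; lia.
Qed.

Lemma Lindex_lt z : z \in layers m A Lindex -> z.+1 < 4 * m.
Proof.
case/mem_layers => k [s [ks_L As ->]]; have [_ hi] := layer_range k As.
have ks_le : 3 * k + 5 * size s <= 11.
  exact: (allP (isT : all (fun kh => 3 * kh.1 + 5 * kh.2 <= 11) Lindex)) _ ks_L.
have := leq_mul ks_le (leqnn m); lia.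
Qed.

Lemma Dindex_range z : z \in layers m A Dindex -> 4 * m <= z < 5 * m.
Proof.
case/mem_layers => k [s [ks_D As ->]]; have := layer_range k As.
by move: ks_D; rewrite !inE => /or4P [] /eqP [-> ->]; lia.
Qed.

Lemma inS_lt4m x : x < 4 * m -> inS (m :: A) (4 * m) x = (x \in layers m A Lindex).
Proof.
move=> x_lt; rewrite /inS leqNgt x_lt /=; apply/idP/idP => [Rx | /rep_layers //].
have x_lt5 : x < 5 * m by lia.
by move: (rep_lt5m x_lt5 Rx); rewrite layers_cat mem_cat => /orP [// | /Dindex_range]; lia.
Qed.

Lemma inS_ge_m x : 0 < x -> inS (m :: A) (4 * m) x -> m <= x.
Proof.
move=> x_gt0 /orP [x_ge | /rep_mA [k [s [As x_eq]]]]; first lia.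
rewrite {x}x_eq in x_gt0 *; case: k x_gt0 => [|k] x_gt0; last by rewrite mulSn -addnA leq_addr.
by case: s As x_gt0 => [|u s] //= /andP [/A_range u_range _] _; lia.
Qed.

Lemma inS_layer t k (s : seq nat) : all (mem A) s -> inS (m :: A) t (k * m + sumn s).
Proof. by move=> As; rewrite /inS (_ : rep _ _) ?orbT //; apply/rep_mA; exists k, s. Qed.

Lemma sumn_A_gt0 (s : seq nat) : all (mem A) s -> 0 < size s -> 0 < sumn s.
Proof. by case: s => [|u s] //= /andP [/A_range u_range _] _; lia. Qed.

Lemma inD_layer t k (s : seq nat) : 2 <= k + size s -> all (mem A) s ->
  inD (m :: A) t (k * m + sumn s).
Proof.
case: k => [|k] ks_ge As.
  case: s As ks_ge => [|u s] //= /andP [uA As] s_gt0.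
  have := @inS_layer t 0 [:: u]; rewrite /= uA mul0n add0n addn0 => /(_ isT) Su.
  have := inS_layer t 0 As; rewrite mul0n add0n => Ss.
  by apply: inD_add Su Ss; [have := A_range uA; lia | exact: sumn_A_gt0].
have := inS_layer t 1 (isT : all (mem A) [::]); rewrite mul1n addn0 => Sm.
rewrite mulSn -addnA; apply: inD_add Sm (inS_layer t k As); first exact: m_gt0.
case: k ks_ge => [|k] ks_ge; first exact: sumn_A_gt0.
by rewrite mulSn -addnA ltn_addr ?m_gt0.
Qed.

Lemma inD_lt5m x : 4 * m <= x < 5 * m ->
  inD (m :: A) (4 * m) x = (x \in layers m A Dindex).
Proof.
case/andP => x_ge x_lt; apply/idP/idP.
  case/inDP => y [/andP [y_gt0 y_lt] Sy Sxy].
  have y_ge := inS_ge_m y_gt0 Sy.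
  have xy_ge : m <= x - y by apply: inS_ge_m Sxy; rewrite subn_gt0.
  have Rx : rep (m :: A) x.
    rewrite -(subnKC (ltnW y_lt)); apply: rep_add (notin0_mA) _ _.
    - by apply: inS_lt_rep Sy; lia.
    - by apply: inS_lt_rep Sxy; lia.
  move: (rep_lt5m x_lt Rx); rewrite layers_cat mem_cat => /orP [/Lindex_lt | //].
  lia.
case/mem_layers => k [s [ks_D As ->]]; apply: inD_layer As.
exact: (allP (isT : all (fun kh => 2 <= kh.1 + kh.2) Dindex)) _ ks_D.
Qed.

Lemma inP_lt4m x : x < 4 * m -> inP (m :: A) (4 * m) x = (x \in layers m A Pindex).
Proof.
move=> x_lt; rewrite /inP inS_lt4m //; apply/idP/idP.
  case/and3P => x_gt0 /mem_layers [k [s [ks_L As x_eq]]] xND.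
  move: ks_L; rewrite inE mem_cat => /or3P [/eqP [k0 /size0nil s0] | ks_P | ks_N].
  - by rewrite x_eq k0 s0 in x_gt0.
  - by apply/mem_layers; exists k, s.
  - move: xND; rewrite x_eq inD_layer //.
    exact: (allP (isT : all (fun kh => 2 <= kh.1 + kh.2) Nindex)) _ ks_N.
move=> x_P; have /mem_layers [k [s [ks_P As x_eq]]] := x_P.
have x_range : 0 < x < 2 * m.
  have := layer_range k As; rewrite -x_eq.
  by move: ks_P; rewrite !inE => /orP [] /eqP [-> ->]; lia.
rewrite (layers_sub Pindex_sub x_P) (proj1 (andP x_range)) /=.
apply/negP => /inDP [y [/andP [y_gt0 y_lt] Sy Sxy]].
have := inS_ge_m y_gt0 Sy; have : m <= x - y by apply: inS_ge_m Sxy; rewrite subn_gt0.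
lia.
Qed.

Lemma cond_eq : cond (m :: A) (4 * m) = 4 * m.
Proof.
apply/eqP; rewrite eqn_leq; apply/andP; split.
  by apply/bigmax_leqP_seq => z; rewrite mem_index_iota.
have gap : ~~ inS (m :: A) (4 * m) (4 * m).-1.
  by rewrite inS_lt4m; [apply/negP => /Lindex_lt | ]; lia.
have gap_mem : (4 * m).-1 \in index_iota 0 (4 * m) by rewrite mem_index_iota; lia.
have := @leq_bigmax_seq _ _ (fun z => ~~ inS (m :: A) (4 * m) z) succn _ gap_mem gap.
by rewrite prednK // muln_gt0 m_gt0.
Qed.

Lemma mult_eq : mult (m :: A) (4 * m) = m.
Proof.
have Sm : inS (m :: A) (4 * m) m.
  rewrite inS_lt4m; last by have := m_gt0; lia.
  by apply/mem_layers; exists 1, [::]; split => //=; rewrite mul1n addn0.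
have iota_split : iota 1 (4 * m) = iota 1 m.-1 ++ iota (1 + m.-1) (3 * m).+1.
  by rewrite -iotaD; congr iota; have := m_gt0; lia.
rewrite /mult iota_split add1n prednK ?m_gt0 // filter_cat /= Sm.
rewrite (eq_in_filter (a2 := pred0)) ?filter_pred0 // => z.
rewrite mem_iota => z_range; apply/negP => /(inS_ge_m _); lia.
Qed.

Lemma cardPL_eq : cardPL (m :: A) (4 * m) = (size A).+1.
Proof.
rewrite /cardPL cond_eq (@count_iota_mem _ _ _ (layers m A Pindex)).
- by rewrite size_layers /= bin0 addnK bin1 addn0.
- exact: uniq_layers.
- by move=> z /(layers_sub Pindex_sub) /Lindex_lt; lia.
- by move=> z z_range; rewrite inP_lt4m //; lia.
Qed.

Lemma cardL_eq : cardL (m :: A) (4 * m) = 4 + 3 * size A + 'C((size A).+1, 2).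
Proof.
rewrite /cardL cond_eq (@count_iota_mem _ _ _ (layers m A Lindex)).
- rewrite size_layers /= !bin0 !addnK bin1 (_ : size A + 2 - 1 = (size A).+1); lia.
- exact: uniq_layers.
- by move=> z /Lindex_lt; lia.
- by move=> z z_range; rewrite inS_lt4m //; lia.
Qed.

Lemma cardDq_eq :
  cardDq (m :: A) (4 * m) = 1 + size A + 'C((size A).+1, 2) + 'C((size A).+2, 3).
Proof.
rewrite /cardDq cond_eq mult_eq (@count_iota_mem _ _ _ (layers m A Dindex)).
- have e2 : size A + 2 - 1 = (size A).+1 by lia.
  have e3 : size A + 3 - 1 = (size A).+2 by lia.
  rewrite size_layers /= bin0 addnK bin1 e2 e3; lia.
- exact: uniq_layers.
- by move=> z /Dindex_range; lia.
- by move=> z z_range; rewrite inD_lt5m //; lia.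
Qed.

Lemma qS_eq : qS (m :: A) (4 * m) = 4.
Proof.
rewrite /qS cond_eq mult_eq (_ : 4 * m + m - 1 = 4 * m + m.-1); last by have := m_gt0; lia.
by rewrite divnMDl ?m_gt0 // divn_small ?addn0 // prednK ?m_gt0.
Qed.

Lemma W0_eq : W0 (m :: A) (4 * m) = (- ('C((size A).+1, 3))%:Z)%R.
Proof.
rewrite /W0 /rhoS qS_eq cond_eq mult_eq subnn cardPL_eq cardL_eq cardDq_eq.
by rewrite -W0_binomial_identity; move: (_.+1 * _)%N => P; lia.
Qed.

End Semigroup.

Theorem proposition3p3 (m a b n : nat) (A : seq nat) :
  0 < m -> 0 < a -> 0 < b -> 3 <= n ->
  3 * m + 1 <= 2 * a -> a < b -> 3 * b <= 5 * m - 1 ->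
  uniq A -> size A = n - 1 -> all (fun x => 0 < x) A ->
  a \in A -> (forall x, x \in A -> a <= x) ->
  b \in A -> (forall x, x \in A -> x <= b) ->
  B3_mod A m ->
  [/\ cond (m :: A) (4 * m) = 4 * m,
      cardPL (m :: A) (4 * m) = n &
      W0 (m :: A) (4 * m) = (- ('C(n, 3))%:Z)%R].
Proof.
move=> m_gt0 _ _ n_ge3 a_lo a_lt_b b_hi A_uniq A_size _ _ a_min _ b_max A_B3.
have m_gt3 : 3 < m by lia.
have A_range u : u \in A -> 3 * m < 2 * u /\ 3 * u < 5 * m.
  by move=> uA; have := a_min u uA; have := b_max u uA; lia.
have n_eq : (size A).+1 = n by lia.
by rewrite cond_eq // cardPL_eq // W0_eq // n_eq.
Qed.
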